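(* For every integer $n\ge 2$, the friendship graph $F_n$ is not $\mathcal{D}$-unique. Specifically, let $H_n$ be the graph on vertices $u,a_1,\dots,a_n,b_1,\dots,b_n$ with edges $ua_i$, $ub_i$, $a_ib_i$ for $1\le i\le n$, and $b_ib_j$ for all $1\le i<j\le n$ (this is $B_n/v$, the contraction of the book graph $B_n$ at an endpoint $v$ of its common edge). Then $H_n$ is not isomorphic to $F_n$, but $D(H_n,x)=D(F_n,x)=(2x+x^2)^n+x(1+x)^{2n}$. *)

From HB Require Import structures.
From mathcomp Require Import all_boot all_order all_algebra.
Set Implicit Arguments. Unset Strict Implicit. Unset Printing Implicit Defensive.
Import Order.TTheory GRing.Theory Num.Theory.

(* A simple graph on a finite vertex type T is given by an adjacency relation
   e : rel T (symmetric and irreflexive for the graphs below). *)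

Definition dominating (T : finType) (e : rel T) (S : {set T}) : bool :=
  [forall v, (v \in S) || [exists w in S, e v w]].

Definition dom_poly (T : finType) (e : rel T) : {poly int} :=
  (\sum_(S : {set T} | dominating e S) 'X^#|S|)%R.

Definition isomorphic (T1 T2 : finType) (e1 : rel T1) (e2 : rel T2) : Prop :=
  exists f : T1 -> T2, bijective f /\ forall x y, e1 x y = e2 (f x) (f y).

(* Vertex set {u, a_1..a_n, b_1..b_n}:
   None = u, Some (i, false) = a_i, Some (i, true) = b_i. *)
Definition vtx (n : nat) : finType := option ('I_n * bool)%type.

Definition friendship (n : nat) : rel (vtx n) := fun x y =>
  match x, y with
  | None, None => false
  | None, Some _ | Some _, None => true
  | Some (i, b), Some (j, c) => (i == j) && (b != c)
  end.

Definition Hgraph (n : nat) : rel (vtx n) := fun x y =>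
  match x, y with
  | None, None => false
  | None, Some _ | Some _, None => true
  | Some (i, b), Some (j, c) => ((i == j) && (b != c)) || [&& b, c & i != j]
  end.

Arguments friendship n : clear implicits.
Arguments Hgraph n : clear implicits.

From HB Require Import structures.
From mathcomp Require Import all_boot all_order all_algebra.
From mathcomp Require Import ring.
Import GRing.Theory.
Local Open Scope ring_scope.

(* The proof has three independent parts.
   - Non-isomorphism: in F_n only the hub u has three distinct neighbours,
     whereas in H_n both u and b_0 do (b_0 sees u, a_0 and b_1 since n >= 2);
     an isomorphism H_n -> F_n would send both to u, contradicting injectivity.
   - Same dominating sets: for any graph in which u is adjacent to all other
     vertices, each a_i - b_i is an edge, and a_i has no further neighbours,
     a set dominates iff it contains u or meets every pair {a_i, b_i}
     ("pair covers").  Both F_n and H_n are such graphs.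
   - The polynomial: encoding a vertex set as a bit for u together with a
     pair of bits for each i, the generating function of pair covers splits
     into the sets containing u, giving x (1+x)^(2n), and those avoiding u,
     where each pair contributes its non-empty subsets, giving (2x+x^2)^n. *)

Lemma big_option (R : Type) (idx : R) (op : Monoid.com_law idx)
    (T : finType) (F : option T -> R) :
  \big[op/idx]_(v : option T) F v = op (F None) (\big[op/idx]_(x : T) F (Some x)).
Proof.
rewrite (bigD1 None) //=; congr (op _ _).
rewrite (reindex_omap Some (fun v => v)); last by case.
by apply: eq_bigl => x /=; rewrite eqxx.
Qed.

Lemma sum_pair (R : nmodType) (I J : finType) (F : I * J -> R) :
  \sum_(p : I * J) F p = \sum_(i : I) \sum_(j : J) F (i, j).
Proof. by rewrite pair_big; apply: eq_big => -[]. Qed.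

Lemma sum_ffun_prod (R : comPzRingType) (I T : finType) (F : T -> R) :
  \sum_(f : {ffun I -> T}) \prod_i F (f i) = (\sum_t F t) ^+ #|I|.
Proof. by rewrite -(bigA_distr_bigA (fun _ => F)) prodr_const. Qed.

(* A product vanishes as soon as one factor is filtered out. *)
Lemma prod_if_forall (R : comPzRingType) (I : finType) (P : pred I) (F : I -> R) :
  (if [forall i, P i] then \prod_i F i else 0) = \prod_i (if P i then F i else 0).
Proof.
case: (boolP [forall i, P i]) => [/forallP allP | /forallPn [i notPi]].
  by apply: eq_bigr => i _; rewrite allP.
by rewrite (bigD1 i) //= (negbTE notPi) mul0r.
Qed.

Section Shape.
Variable n : nat.

Definition pair_cover (S : {set vtx n}) : bool :=
  (None \in S) || [forall i, (Some (i, false) \in S) || (Some (i, true) \in S)].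

Lemma friendship_leaf_nbr i c w :
  friendship n (Some (i, c)) w -> w = None \/ w = Some (i, ~~ c).
Proof.
case: w => [[j d]|] /=; last by left.
by case/andP => /eqP <-; case: c d => [] [] //= _; right.
Qed.

Lemma friendship_three_nbrs x y1 y2 y3 :
  y1 != y2 -> y1 != y3 -> y2 != y3 ->
  friendship n x y1 -> friendship n x y2 -> friendship n x y3 -> x = None.
Proof.
case: x => [[i c]|] //= n12 n13 n23 /friendship_leaf_nbr e1
  /friendship_leaf_nbr e2 /friendship_leaf_nbr e3.
by case: e1 e2 e3 n12 n13 n23 => -> [] -> [] ->; rewrite eqxx.
Qed.

Section Dominating.
Variable e : rel (vtx n).
Hypothesis hub_to_leaf : forall x, e None (Some x).
Hypothesis leaf_to_hub : forall x, e (Some x) None.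
Hypothesis partner : forall i c, e (Some (i, c)) (Some (i, ~~ c)).
Hypothesis a_leaf_nbr : forall i w,
  e (Some (i, false)) w -> w = None \/ w = Some (i, true).

Lemma dominating_pair_cover (S : {set vtx n}) :
  (0 < n)%N -> dominating e S = pair_cover S.
Proof.
move=> n_gt0; rewrite /dominating /pair_cover.
have dominated_by v w : w \in S -> e v w -> [exists w in S, e v w].
  by move=> wS evw; apply/existsP; exists w; rewrite wS.
case: (boolP (None \in S)) => [uS | uNS] /=.
  apply/forallP => -[x|]; rewrite ?uS // orbC.
  by rewrite (dominated_by _ None).
apply/forallP/forallP => [dom i | cover [[i c]|]].
- case/orP: (dom (Some (i, false))) => [-> // | /existsP [w /andP [wS]]].
  by case/a_leaf_nbr => wE; rewrite wE in wS; rewrite wS ?orbT in uNS *.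
- have [aS | /negbTE aNS] := boolP (Some (i, false) \in S).
    by case: c; rewrite ?aS // orbC (dominated_by _ _ aS).
  have bS : Some (i, true) \in S by rewrite -[_ \in S]orFb -aNS cover.
  by case: c; rewrite ?bS // orbC (dominated_by _ _ bS).
- have i0 : 'I_n := Ordinal n_gt0.
  by case/orP: (cover i0) => vS; rewrite orbC (dominated_by _ _ vS).
Qed.

End Dominating.

Lemma dominating_friendship (S : {set vtx n}) :
  (0 < n)%N -> dominating (friendship n) S = pair_cover S.
Proof.
by apply: dominating_pair_cover => [x | [] | i [] | i w /friendship_leaf_nbr] //=;
  rewrite eqxx.
Qed.

Lemma dominating_Hgraph (S : {set vtx n}) :
  (0 < n)%N -> dominating (Hgraph n) S = pair_cover S.
Proof.
apply: dominating_pair_cover => [x | [] | i [] | i [[j d]|]] //=;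
  rewrite ?eqxx ?orbF //; last by left.
by case/andP => /eqP <-; case: d => // _; right.
Qed.

Definition code := (bool * {ffun 'I_n -> bool * bool})%type.

Definition set_of_code (p : code) : {set vtx n} :=
  [set v | if v is Some (i, c) then (if c then (p.2 i).2 else (p.2 i).1) else p.1].

Definition code_of_set (S : {set vtx n}) : code :=
  (None \in S, [ffun i => (Some (i, false) \in S, Some (i, true) \in S)]).

Lemma code_of_setK : cancel code_of_set set_of_code.
Proof. by move=> S; apply/setP => -[[i []]|]; rewrite inE //= ffunE. Qed.

Lemma set_of_codeK : cancel set_of_code code_of_set.
Proof.
move=> [c f]; rewrite /code_of_set inE /=; congr pair; apply/ffunP => i.
by rewrite ffunE !inE /=; case: (f i).
Qed.

Definition weight (b : bool) : {poly int} := if b then 'X else 1.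

Definition pair_weight (q : bool * bool) : {poly int} := weight q.1 * weight q.2.

Lemma X_card_set_of_code (p : code) :
  'X ^+ #|set_of_code p| = weight p.1 * \prod_i pair_weight (p.2 i).
Proof.
rewrite -prodr_const big_mkcond /= big_option inE /=; congr (_ * _).
rewrite [RHS](eq_bigr (fun i => \prod_(c : bool)
    if Some (i, c) \in set_of_code p then 'X else 1)); last first.
  by move=> i _; rewrite big_bool /= !inE /= /pair_weight mulrC.
by rewrite pair_big; apply: eq_big => -[i c].
Qed.

Lemma pair_cover_code (p : code) :
  pair_cover (set_of_code p) = p.1 || [forall i, (p.2 i).1 || (p.2 i).2].
Proof.
rewrite /pair_cover inE; congr (_ || _).
by apply: eq_forallb => i; rewrite !inE.
Qed.

Lemma pair_cover_poly :
  \sum_(S | pair_cover S) 'X ^+ #|S| =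
  ('X *+ 2 + 'X ^+ 2) ^+ n + 'X * (1 + 'X) ^+ (2 * n) :> {poly int}.
Proof.
rewrite (reindex set_of_code) /=; last first.
  by apply: onW_bij; exists code_of_set; [exact: set_of_codeK | exact: code_of_setK].
(* Split according to the u-bit; the remaining sums are over the pairs. *)
rewrite big_mkcond sum_pair big_bool /= addrC; congr (_ + _).
- rewrite (eq_bigr (fun f : {ffun 'I_n -> bool * bool} =>
      \prod_i (if (f i).1 || (f i).2 then pair_weight (f i) else 0))); last first.
    by move=> f _; rewrite pair_cover_code X_card_set_of_code mul1r prod_if_forall.
  rewrite (@sum_ffun_prod _ _ _ (fun q => if q.1 || q.2 then pair_weight q else 0)).
  by rewrite card_ord sum_pair !big_bool /= /pair_weight /weight /=; congr (_ ^+ _); ring.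
- rewrite (eq_bigr (fun f : {ffun 'I_n -> bool * bool} =>
      'X * \prod_i pair_weight (f i))); last first.
    by move=> f _; rewrite pair_cover_code X_card_set_of_code.
  rewrite -big_distrr (@sum_ffun_prod _ _ _ pair_weight) card_ord exprM.
  congr (_ * _ ^+ _).
  by rewrite sum_pair !big_bool /= /pair_weight /weight /=; ring.
Qed.

Lemma dom_poly_of_pair_cover (e : rel (vtx n)) :
  (forall S, dominating e S = pair_cover S) ->
  dom_poly e = ('X *+ 2 + 'X ^+ 2) ^+ n + 'X * (1 + 'X) ^+ (2 * n).
Proof.
by move=> domE; rewrite -pair_cover_poly; apply: eq_bigl => S; rewrite domE.
Qed.

End Shape.

Theorem mainTheorem7 (n : nat) (hn : (2 <= n)%N) :
  ~ isomorphic (Hgraph n) (friendship n) /\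
  dom_poly (Hgraph n) = dom_poly (friendship n) /\
  dom_poly (friendship n) = ('X *+ 2 + 'X ^+ 2) ^+ n + 'X * (1 + 'X) ^+ (2 * n).
Proof.
have n_gt0 : (0 < n)%N by apply: leq_trans hn.
have dom_poly_F := @dom_poly_of_pair_cover n _ (dominating_friendship n ^~ n_gt0).
have dom_poly_H := @dom_poly_of_pair_cover n _ (dominating_Hgraph n ^~ n_gt0).
split; last by rewrite dom_poly_H dom_poly_F.
move=> [f [/bij_inj f_inj f_edge]].
pose i0 : 'I_n := Ordinal n_gt0; pose i1 : 'I_n := Ordinal hn.
(* Both u and b_0 have three distinct neighbours in H_n, so both map to u. *)
have u_to_hub : f None = None.
  apply: (@friendship_three_nbrs n _
    (f (Some (i0, false))) (f (Some (i0, true))) (f (Some (i1, false))));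
    by rewrite ?(inj_eq f_inj) -?f_edge.
have b0_to_hub : f (Some (i0, true)) = None.
  apply: (@friendship_three_nbrs n _
    (f None) (f (Some (i0, false))) (f (Some (i1, true))));
    by rewrite ?(inj_eq f_inj) -?f_edge.
by have := f_inj _ _ (etrans u_to_hub (esym b0_to_hub)).
Qed.
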